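(* Let $K_E$ be a partial $E$-field with $K$ algebraically closed, and let $\sigma:K\to K$ be a field automorphism of order two, $R=K^\sigma$, $i\in K$ with $i^2=-1$, and $\mathbb{S}^1=\{z\in K^\times: z\sigma(z)=1\}$. Then $\sigma\circ E=E\circ\sigma$ (as partial functions) if and only if the following three conditions hold: (1) $\sigma(\mathrm{dom}(E))=\mathrm{dom}(E)$; (2) $E(R\cap\mathrm{dom}(E))\subseteq R_{>0}$; (3) $E(iR\cap\mathrm{dom}(E))\subseteq\mathbb{S}^1$.
   Context: A partial $E$-field $K_E$ consists of a field $K$ of characteristic $0$, a $\mathbb{Q}$-vector subspace $\mathrm{dom}(E)\subseteq K$ and a group homomorphism $E:(\mathrm{dom}(E),+)\to(K^\times,\cdot)$. Since $K$ is algebraically closed of characteristic $0$ and $\sigma$ has order two, $R=K^\sigma$ is a real closed field, ordered with positive cone $R_{>0}$. *)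

From mathcomp Require Import all_boot all_order all_algebra.
Set Implicit Arguments. Unset Strict Implicit. Unset Printing Implicit Defensive.
Import GRing.Theory.
Local Open Scope ring_scope.

(* E is represented by a
   total function K -> K whose values outside dom(E) are irrelevant. *)
Definition partial_E_field (K : fieldType) (D : {pred K}) (E : K -> K) : Prop :=
  [/\ 0 \in D,
      (forall x y, x \in D -> y \in D -> x + y \in D),
      (forall (q : rat) x, x \in D -> ratr q * x \in D),
      (forall x, x \in D -> E x != 0)
    & (forall x y, x \in D -> y \in D -> E (x + y) = E x * E y)].

Definition fixedR (K : fieldType) (s : K -> K) (r : K) : Prop := s r = r.

(* the positive cone of the real closed field R = K^sigma:
   nonzero squares of elements of R (the unique ordering of R) *)
Definition R_pos (K : fieldType) (s : K -> K) (r : K) : Prop :=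
  fixedR s r /\ r != 0 /\ exists t, fixedR s t /\ r = t * t.

Definition circle1 (K : fieldType) (s : K -> K) (z : K) : Prop :=
  z != 0 /\ z * s z = 1.

(* sigma o E = E o sigma as partial functions:
   dom(sigma o E) = dom E, dom(E o sigma) = sigma^-1(dom E) *)
Definition commutes_partial (K : fieldType) (D : {pred K}) (E : K -> K)
  (s : K -> K) : Prop :=
  (forall x, (x \in D) <-> (s x \in D)) /\
  (forall x, x \in D -> s (E x) = E (s x)).

From mathcomp Require Import all_boot all_order all_algebra.
From mathcomp Require Import ring.
Set Implicit Arguments. Unset Strict Implicit. Unset Printing Implicit Defensive.
Import GRing.Theory.
Local Open Scope ring_scope.

(* Every x splits as a + b with sigma(a) = a and sigma(b) = -b, where b lies
   in iR because sigma(i) = -i.  Commutation then amounts to sigma(E a) = E a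
   and sigma(E b) = (E b)^-1, i.e. to conditions (2) and (3); positivity in (2)
   comes from E a = E(a/2)^2.  The fact sigma(i) = -i holds because otherwise
   sigma would fix both square roots of -1, whereas for z with sigma(z) != z and
   u^2 = z - sigma(z), the element sigma(u)/u is a square root of -1 of norm 1. *)

Lemma closed_field_sqrt {K : closedFieldType} (w : K) : exists u : K, u ^+ 2 = w.
Proof.
have [u Du] := @GRing.solve_monicpoly K 2 (nth 0 [:: w]) isT.
by exists u; rewrite Du !big_ord_recl big_ord0 mul0r mulr1 !addr0.
Qed.

Lemma pchar0_two_neq0 (K : fieldType) : [pchar K] =i pred0 -> (2 : K) != 0.
Proof. by move=> /pcharf0P charK0; rewrite (charK0 2%N). Qed.

Lemma involution_image_stable (T : Type) (s : T -> T) (D : T -> Prop) :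
  involutive s ->
  (forall y, (exists2 x, D x & y = s x) <-> D y) <-> (forall x, D x <-> D (s x)).
Proof.
move=> sK; split=> [imD x | Ds y]; split.
- by move=> Dx; apply: (imD _).1; exists x.
- by move=> Dsx; apply: (imD _).1; exists (s x); rewrite ?sK.
- by move=> [x Dx ->]; apply: (Ds x).1.
- by move=> Dy; exists (s y); rewrite ?sK //; apply: (Ds _).2; rewrite sK.
Qed.

Section Involution.

Variables (K : fieldType) (s : {rmorphism K -> K}).
Hypothesis sK : involutive s.
Hypothesis two_neq0 : (2 : K) != 0.

Lemma fmorph_half : s 2^-1 = 2^-1.
Proof. by rewrite fmorphV rmorph_nat. Qed.

Definition sym_part (x : K) : K := 2^-1 * (x + s x).
Definition skew_part (x : K) : K := 2^-1 * (x - s x).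

Lemma sym_partE x : s (sym_part x) = sym_part x.
Proof. by rewrite rmorphM fmorph_half rmorphD sK addrC. Qed.

Lemma skew_partE x : s (skew_part x) = - skew_part x.
Proof. by rewrite rmorphM fmorph_half rmorphB sK /skew_part; ring. Qed.

Lemma sym_add_skew x : sym_part x + skew_part x = x.
Proof. by rewrite /sym_part /skew_part; field. Qed.

Lemma sym_sub_skew x : sym_part x - skew_part x = s x.
Proof. by rewrite /sym_part /skew_part; field. Qed.

Lemma circle1_inv z : circle1 s z -> s z = z^-1.
Proof. by move=> [z_neq0 zsz]; apply: (mulfI z_neq0); rewrite zsz mulfV. Qed.

End Involution.

Lemma conj_sqrtN1 (K : closedFieldType) (s : {rmorphism K -> K}) (i : K) :
  involutive s -> (exists z, s z != z) -> (2 : K) != 0 ->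
  i ^+ 2 = -1 -> s i = - i.
Proof.
move=> sK [z sz_neq_z] two_neq0 i2.
have sqrtN1_eq v : v ^+ 2 = -1 -> v = i \/ v = - i.
  by rewrite -i2 => /eqP; rewrite eqf_sqr => /orP[] /eqP; [left | right].
have /sqrtN1_eq[si_i | //] : s i ^+ 2 = -1 by rewrite -rmorphXn i2 rmorphN1.
have w_neq0 : z - s z != 0 by rewrite subr_eq0 eq_sym.
have sw : s (z - s z) = - (z - s z) by rewrite rmorphB sK opprB.
have [u u2] := closed_field_sqrt (z - s z).
have u_neq0 : u != 0 by apply: contraNneq w_neq0 => u0; rewrite -u2 u0 expr0n.
pose v := s u / u.
have v_neq0 : v != 0 by rewrite mulf_neq0 ?invr_eq0 ?fmorph_eq0.
have v2 : v ^+ 2 = -1.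
  by rewrite expr_div_n -rmorphXn u2 sw mulNr divff // expf_neq0.
have sv_inv : s v = v^-1 by rewrite fmorph_div sK invf_div.
have sv : s v = v by case: (sqrtN1_eq v v2) => ->; rewrite ?rmorphN si_i.
have : v ^+ 2 = 1 by rewrite expr2 -{1}sv sv_inv mulVf.
rewrite v2 => /eqP; rewrite -subr_eq0 -opprD oppr_eq0 => two_eq0.
by rewrite two_eq0 in two_neq0.
Qed.

Section PartialEField.

Variables (K : fieldType) (D : {pred K}) (E : K -> K).
Hypothesis EF : partial_E_field D E.

Lemma dom_opp x : x \in D -> - x \in D.
Proof.
case: EF => _ _ Dq _ _ Dx.
by have := Dq (-1) x Dx; rewrite (ratr_int K (-1)) mulN1r.
Qed.

Lemma dom_half x : x \in D -> 2^-1 * x \in D.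
Proof. by case: EF => _ _ Dq _ _ Dx; have := Dq (2^-1) x Dx; rewrite /ratr mul1r. Qed.

Lemma E0 : E 0 = 1.
Proof.
case: EF => D0 _ _ Enz Ehom; apply: (mulfI (Enz 0 D0)).
by rewrite mulr1 -Ehom ?addr0.
Qed.

Lemma E_opp x : x \in D -> E (- x) = (E x)^-1.
Proof.
case: EF => _ _ _ Enz Ehom Dx; apply: (mulfI (Enz x Dx)).
by rewrite -Ehom ?dom_opp // subrr E0 mulfV ?Enz.
Qed.

End PartialEField.

Section Commutation.

Variables (K : fieldType) (D : {pred K}) (E : K -> K).
Variables (s : {rmorphism K -> K}) (i : K).
Hypothesis EF : partial_E_field D E.
Hypothesis sK : involutive s.
Hypothesis two_neq0 : (2 : K) != 0.
Hypothesis i2 : i ^+ 2 = -1.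
Hypothesis si : s i = - i.

Lemma commutes_E_fixed_pos :
  commutes_partial D E s -> forall x, x \in D -> fixedR s x -> R_pos s (E x).
Proof.
case: EF => _ _ _ Enz Ehom [_ sE] x Dx sx.
have Dx2 := dom_half EF Dx.
split; first by rewrite /fixedR sE // sx.
split; first exact: Enz.
exists (E (2^-1 * x)); split; first by rewrite /fixedR sE // rmorphM fmorph_half sx.
by rewrite -Ehom //; congr E; field.
Qed.

Lemma commutes_E_imag_circle :
  commutes_partial D E s ->
  forall x, x \in D -> (exists r, fixedR s r /\ x = i * r) -> circle1 s (E x).
Proof.
case: EF => _ _ _ Enz Ehom [_ sE] x Dx [r [sr x_ir]].
rewrite {}x_ir in Dx *; split; first exact: Enz.
by rewrite sE // rmorphM si sr mulNr (E_opp EF) // mulfV ?Enz.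
Qed.

Lemma conditions_commutes :
  (forall x, (x \in D) <-> (s x \in D)) ->
  (forall x, x \in D -> fixedR s x -> R_pos s (E x)) ->
  (forall x, x \in D -> (exists r, fixedR s r /\ x = i * r) -> circle1 s (E x)) ->
  commutes_partial D E s.
Proof.
move=> Ds Epos Ecirc; split=> // x Dx.
case: EF => _ Dadd _ _ Ehom.
have Dsx : s x \in D := (Ds x).1 Dx.
have Da : sym_part s x \in D by apply/(dom_half EF)/Dadd.
have Db : skew_part s x \in D by apply/(dom_half EF)/Dadd/(dom_opp EF).
have [sEa _] := Epos _ Da (sym_partE sK _).
have sEb : s (E (skew_part s x)) = (E (skew_part s x))^-1.
  apply/circle1_inv/Ecirc => //; exists (- (i * skew_part s x)); split.
    by rewrite /fixedR rmorphN rmorphM si skew_partE //; ring.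
  by rewrite mulrN mulrA -expr2 i2 mulN1r opprK.
rewrite -[in RHS](sym_sub_skew s two_neq0) Ehom ?(dom_opp EF) // (E_opp EF) // -sEb.
by rewrite -[E (sym_part s x)]sEa -rmorphM -Ehom // sym_add_skew.
Qed.

End Commutation.

Theorem proposition3p1 (K : closedFieldType) (D : {pred K}) (E : K -> K)
  (s : {rmorphism K -> K}) (i : K) :
  [pchar K] =i pred0 ->
  partial_E_field D E ->
  (forall x, s (s x) = x) -> (exists x, s x != x) ->
  i ^+ 2 = -1 ->
  commutes_partial D E s <->
  [/\ (forall y, (exists2 x, x \in D & y = s x) <-> y \in D),
      (forall x, x \in D -> fixedR s x -> R_pos s (E x))
    & (forall x, x \in D -> (exists r, fixedR s r /\ x = i * r) ->
         circle1 s (E x))].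
Proof.
move=> charK0 EF sK s_nontriv i2.
have two_neq0 := pchar0_two_neq0 charK0.
have si := conj_sqrtN1 sK s_nontriv two_neq0 i2.
have domE := involution_image_stable (fun x => x \in D) sK.
split=> [commE | [/domE Ds Epos Ecirc]].
- split; first by apply/domE; case: commE.
  + exact: (commutes_E_fixed_pos EF two_neq0 commE).
  + exact: (commutes_E_imag_circle EF si commE).
- exact: (conditions_commutes EF sK two_neq0 i2 si Ds Epos Ecirc).
Qed.
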